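(* Let $T$ be a reduced linear trellis of length $n$. For each span $\mathfrak{s}$ choose a subset $\mathcal{B}_{\mathfrak{s}}\subseteq\mathbb{S}_{\mathfrak{s}}(T)$ whose image in the quotient $\mathbb{S}_{\mathfrak{s}}(T)/\mathbb{S}_{<\mathfrak{s}}(T)$ is a basis of that quotient (with distinct elements mapping to distinct basis elements). Then $\mathcal{B}:=\bigsqcup_{\mathfrak{s}}\mathcal{B}_{\mathfrak{s}}$ (union over all spans) is a basis of $\mathbb{S}(T)$, and for every span $\mathfrak{s}$ the set $\mathcal{B}\cap\mathbb{S}_{\mathfrak{s}}(T)$ spans $\mathbb{S}_{\mathfrak{s}}(T)$. In particular every reduced linear trellis has a product basis.
   Context: Let $\mathbb{F}$ be a finite field with $q$ elements and $n\ge1$; indices are taken in $\mathbb{Z}_n$. A trellis $T$ of length $n$ over $\mathbb{F}$ consists of pairwise disjoint finite vertex sets $V_i(T)$, $i\in\mathbb{Z}_n$, and edge sets $E_i(T)\subseteq V_i(T)\times\mathbb{F}\times V_{i+1}(T)$; $(v,\alpha,w)\in E_i(T)$ is an edge from $v$ to $w$ with label $\alpha$ at time index $i$. Every trellis is assumed trim: each vertex has at least one outgoing and one incoming edge. $T$ is linear if every $V_i(T)$ is an $\mathbb{F}$-vector space and every $E_i(T)$ is a subspace of $V_i(T)\times\mathbb{F}\times V_{i+1}(T)$. A path of length $m$ is a sequence $v_0\alpha_0v_1\alpha_1\cdots\alpha_{m-1}v_m$ such that each $(v_j,\alpha_j,v_{j+1})$ is an edge. A cycle is a path of length $n$ starting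 in $V_0(T)$ with $v_n=v_0$; it is identified with $(\mathbf{v},\boldsymbol{\alpha})\in\prod_{i\in\mathbb{Z}_n}V_i(T)\times\mathbb{F}^n$. The label code $\mathbb{S}(T)$ is the set of cycles (a linear subspace if $T$ is linear). $T$ is reduced if every edge lies on some cycle. Spans. For $a\in\mathbb{Z}_n$ and $0\le l\le n-1$ put $[a,a+l]=\{a,a+1,\dots,a+l\}\subseteq\mathbb{Z}_n$ and $(a,a+l]=[a,a+l]\setminus\{a\}$. Such a pair $(a,l)$ is a span of length $l$; there are also two degenerate spans, $\emptyset$ (length $-1$) and $\mathbb{Z}_n$ (length $n$). Partial order: $(a_1,l_1)\le(a_2,l_2)$ iff ($l_1\le l_2<n-1$ and $[a_1,a_1+l_1]\subseteq[a_2,a_2+l_2]$) or ($l_2=n-1$ and $(a_1,a_1+l_1]\subseteq(a_2,a_2+l_2]$) or $l_1=-1$ or $l_2=n$. A nondegenerate span $(a,l)$ is a span of the cycle $(\mathbf{v},\boldsymbol{\alpha})$ if $\{i:v_i\neq0\}\subseteq(a,a+l]$ and $\{i:\alpha_i\ne0\}\subseteq[a,a+l]$; $\emptyset$ is a span only of the zero cycle and $\mathbb{Z}_n$ is a span of every cycle. The span subcode $\mathbb{S}_{\mathfrak{s}}(T)$ is the subspace of cycles having span $\mathfrak{s}$, and $\mathbb{S}_{<\mathfrak{s}}(T):=\sum_{\mathfrak{s}'\lneq\mathfrak{s}}\mathbb{S}_{\mathfrak{s}'}(T)$. A product basis of $T$ is a basis $\mathcal{B}$ of $\mathbb{S}(T)$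 such that $\mathcal{B}\cap\mathbb{S}_{\mathfrak{s}}(T)$ spans $\mathbb{S}_{\mathfrak{s}}(T)$ for every span $\mathfrak{s}$. *)

From HB Require Import structures.
From mathcomp Require Import all_boot all_order all_algebra.
Set Implicit Arguments. Unset Strict Implicit. Unset Printing Implicit Defensive.
Import GRing.Theory.
Local Open Scope ring_scope.

(* Time indices Z_n are represented by 'I_n; i+1 is the cyclic successor
   [ordS i].  The vertex space V_i(T) of a linear trellis is a finite
   F-vector space, represented (up to isomorphism) as 'rV[F]_(vdim i).
   The edge set E_i(T) is given by its membership predicate on
   V_i x F x V_{i+1}. *)
Record trellis (F : finFieldType) (n : nat) := Trellis {
  vdim : 'I_n -> nat;
  edge : forall i : 'I_n, 'rV[F]_(vdim i) -> F -> 'rV[F]_(vdim (ordS i)) -> bool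
}.
Arguments vdim {F n} t i : rename.
Arguments edge {F n} t i _ _ _ : rename.

Section Trellis.
Variables (F : finFieldType) (n : nat) (T : trellis F n).

Definition linear_trellis : Prop :=
  forall i : 'I_n,
    edge T i 0 0 0 /\
    forall (c : F) v a w v' a' w',
      edge T i v a w -> edge T i v' a' w' ->
      edge T i (c *: v + v') (c * a + a') (c *: w + w').

Definition trim_trellis : Prop :=
  (forall (i : 'I_n) (v : 'rV[F]_(vdim T i)), exists a w, edge T i v a w) /\
  (forall (i : 'I_n) (w : 'rV[F]_(vdim T (ordS i))), exists v a, edge T i v a w).

(* Coordinates of the ambient space  prod_i V_i(T) x F^n. *)
Definition coord := ({i : 'I_n & 'I_(vdim T i)} + 'I_n)%type.

Definition ambient := {ffun coord -> F^o}.

Definition state (x : ambient) (i : 'I_n) : 'rV[F]_(vdim T i) :=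
  \row_j x (inl (Tagged (fun k => 'I_(vdim T k)) j)).

Definition label (x : ambient) (i : 'I_n) : F := x (inr i).

Definition is_cycle (x : ambient) : bool :=
  [forall i : 'I_n, edge T i (state x i) (label x i) (state x (ordS i))].

Definition reduced_trellis : Prop :=
  forall (i : 'I_n) v a w, edge T i v a w ->
    exists x, [/\ is_cycle x, state x i = v, label x i = a & state x (ordS i) = w].

End Trellis.

(* Spans: the empty span (length -1), the full span Z_n (length n), and
   nondegenerate spans (a, l) with a in Z_n and 0 <= l <= n-1. *)
Inductive tspan (n : nat) :=
| SEmpty
| SFull
| SInt of 'I_n & 'I_n.

Definition span_code n (s : tspan n) : option (option ('I_n * 'I_n)) :=
  match s with
  | SEmpty => None
  | SFull => Some None
  | SInt a l => Some (Some (a, l))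
  end.
Definition span_decode n (c : option (option ('I_n * 'I_n))) : tspan n :=
  match c with
  | None => SEmpty n
  | Some None => SFull n
  | Some (Some (a, l)) => SInt a l
  end.
Lemma span_codeK n : cancel (@span_code n) (@span_decode n).
Proof. by case. Qed.
HB.instance Definition _ n := Finite.copy (tspan n) (can_type (@span_codeK n)).

Section Spans.
Variable n : nat.

(* i \in [a, a+l]  (in Z_n) *)
Definition in_cint (a l i : 'I_n) : bool := ((i + n - a) %% n <= l)%N.
(* i \in (a, a+l]  (in Z_n) *)
Definition in_hoint (a l i : 'I_n) : bool := (0 < (i + n - a) %% n <= l)%N.

Definition span_le (s1 s2 : tspan n) : bool :=
  match s1, s2 with
  | SEmpty, _ => true
  | _, SFull => true
  | SInt a1 l1, SInt a2 l2 =>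
      ([&& (l1 <= l2)%N, (l2 < n.-1)%N &
           [forall i : 'I_n, in_cint a1 l1 i ==> in_cint a2 l2 i]])
      || ((l2 == n.-1 :> nat) &&
           [forall i : 'I_n, in_hoint a1 l1 i ==> in_hoint a2 l2 i])
  | _, _ => false
  end.

Definition span_lt (s1 s2 : tspan n) : bool := span_le s1 s2 && (s1 != s2).
End Spans.

Section SpanCodes.
Variables (F : finFieldType) (n : nat) (T : trellis F n).

Definition has_span (s : tspan n) (x : ambient T) : bool :=
  match s with
  | SEmpty => x == 0
  | SFull => true
  | SInt a l =>
      [forall i : 'I_n, (state x i != 0) ==> in_hoint a l i] &&
      [forall i : 'I_n, (label x i != 0) ==> in_cint a l i]
  end.

Definition cycle_code : {vspace ambient T} :=
  <<[seq x <- enum (ambient T) | is_cycle x]>>%VS.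

Definition span_subcode (s : tspan n) : {vspace ambient T} :=
  <<[seq x <- enum (ambient T) | is_cycle x && has_span s x]>>%VS.

Definition span_subcode_lt (s : tspan n) : {vspace ambient T} :=
  (\sum_(s' : tspan n | span_lt s' s) span_subcode s')%VS.
End SpanCodes.

(* The family X (a sequence, so with multiplicities) of vectors of U maps
   injectively onto a basis of the quotient U / L (L a subspace of U):
   the classes span U / L and are linearly independent in U / L. *)
Definition quotient_basis (F : fieldType) (vT : vectType F)
    (U L : {vspace vT}) (X : seq vT) : Prop :=
  [/\ all (fun x => x \in U) X,
      (U <= <<X>> + L)%VS &
      forall c : 'I_(size X) -> F,
        (\sum_(j < size X) c j *: X`_j \in L) -> forall j, c j = 0].

(* The classes of the [B s] are bases of the quotients S_s / S_<s, so all that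
   is needed is an exchange property: a cycle x of span s = (a, l) that is a sum
   of cycles with spans of length at most l, all different from s, already lies
   in S_<s.  Cut every summand at time a and keep its part after a; the sum y of
   these parts is again a cycle, because the states at a of the summands add up
   to the state of x at a, which is zero.  Its span is (a, l - 1), and x - y has
   span (a + 1, l - 1), both strictly below s.  Listing the spans by decreasing
   length, the exchange property makes the union of the [B s] independent, and
   induction on the length shows that its members in S_s span S_s. *)

From HB Require Import structures.
From mathcomp Require Import all_boot all_order all_algebra zify.
Set Implicit Arguments. Unset Strict Implicit. Unset Printing Implicit Defensive.
Import GRing.Theory.
Local Open Scope ring_scope.

Section Offsets.
Variable n : nat.
Implicit Types a b i j : 'I_n.

Definition offset b i : nat := ((i + n - b) %% n)%N.

Lemma offsetE b i : offset b i = if (b <= i)%N then (i - b)%N else (i + n - b)%N.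
Proof.
rewrite /offset; have hb := ltn_ord b; have hi := ltn_ord i.
case: leqP => h; last by rewrite modn_small //; lia.
have -> : (i + n - b = (i - b) + n)%N by lia.
by rewrite modnDr modn_small //; lia.
Qed.

Lemma offset_lt b i : (offset b i < n)%N.
Proof.
by rewrite offsetE; have := ltn_ord b; have := ltn_ord i; case: (leqP b i); lia.
Qed.

Lemma offset_inj b : injective (offset b).
Proof.
move=> i j; rewrite !offsetE => e; apply: val_inj => /=; move: e.
have := ltn_ord b; have := ltn_ord i; have := ltn_ord j.
by case: (leqP b i); case: (leqP b j); lia.
Qed.

Lemma offsetii i : offset i i = 0%N.
Proof. by rewrite offsetE leqnn subnn. Qed.

Lemma offset_eq0 b i : (offset b i == 0%N) = (i == b).
Proof. by rewrite -(offsetii b) (inj_eq (@offset_inj b)). Qed.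

Lemma offset_surj b k : (k < n)%N -> exists j, offset b j = k.
Proof.
move=> hk; have hb := ltn_ord b.
have hj : ((if b + k < n then b + k else b + k - n) < n)%N by case: ifP; lia.
exists (Ordinal hj); rewrite offsetE /=.
by case: (ltnP (b + k) n) => h1; case: leqP => h2; lia.
Qed.

Lemma offset_rebase b a i : offset a i =
  if (offset b a <= offset b i)%N then (offset b i - offset b a)%N
  else (offset b i + n - offset b a)%N.
Proof.
rewrite !offsetE.
have := ltn_ord b; have := ltn_ord i; have := ltn_ord a.
by case: (leqP b a) => h1; case: (leqP b i) => h2; case: (leqP a i) => h3;
  case: ifP => /= h4; lia.
Qed.

Lemma offset_ordS b i :
  offset b (ordS i) = if offset b i == n.-1 then 0%N else (offset b i).+1.
Proof.
have ordSE : val (ordS i) = if i.+1 == n then 0%N else i.+1.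
  rewrite /=; have := ltn_ord i; case: eqP => [->|h] hi; first by rewrite modnn.
  by rewrite modn_small //; lia.
rewrite !offsetE ordSE; have := ltn_ord b; have := ltn_ord i.
by case: (i.+1 =P n) => h1; case: (leqP b i) => h2; try case: (leqP b 0) => h3;
  try case: (leqP b i.+1) => h4; case: eqP => h5; lia.
Qed.

Lemma offset_ord_pred b i :
  offset b (ord_pred i) = if offset b i == 0%N then n.-1 else (offset b i).-1.
Proof.
have := offset_ordS b (ord_pred i); rewrite ord_predK.
by have := offset_lt b (ord_pred i); have := offset_lt b i; case: eqP; case: eqP; lia.
Qed.

Lemma offset_ordSl a i : (1 < n)%N ->
  offset (ordS a) i = if offset a i == 0%N then n.-1 else (offset a i).-1.
Proof.
move=> hn; rewrite (offset_rebase a (ordS a) i) offset_ordS offsetii.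
by have := offset_lt a i; case: eqP; case: eqP => /= *; try case: ifP; lia.
Qed.

End Offsets.

Section Ambient.
Variables (F : finFieldType) (n : nat) (T : trellis F n).
Implicit Types (x y : ambient T) (c : F).

Lemma state0 i : state (0 : ambient T) i = 0.
Proof. by apply/rowP => j; rewrite !mxE ffunE. Qed.
Lemma stateD x y i : state (x + y) i = state x i + state y i.
Proof. by apply/rowP => j; rewrite !mxE ffunE. Qed.
Lemma stateZ c x i : state (c *: x) i = c *: state x i.
Proof. by apply/rowP => j; rewrite !mxE ffunE. Qed.
Lemma stateB x y i : state (x - y) i = state x i - state y i.
Proof. by apply/rowP => j; rewrite !mxE !ffunE. Qed.
Lemma state_sum (I : Type) (r : seq I) (P : pred I) (f : I -> ambient T) i :
  state (\sum_(t <- r | P t) f t) i = \sum_(t <- r | P t) state (f t) i.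
Proof. exact: (big_morph (fun x => state x i) (fun x y => stateD x y i) (state0 i)). Qed.

Lemma label0 i : label (0 : ambient T) i = 0.
Proof. by rewrite /label ffunE. Qed.
Lemma labelD x y i : label (x + y) i = label x i + label y i.
Proof. by rewrite /label ffunE. Qed.
Lemma labelZ c x i : label (c *: x) i = c * label x i.
Proof. by rewrite /label ffunE. Qed.
Lemma labelB x y i : label (x - y) i = label x i - label y i.
Proof. by rewrite /label !ffunE. Qed.
Lemma label_sum (I : Type) (r : seq I) (P : pred I) (f : I -> ambient T) i :
  label (\sum_(t <- r | P t) f t) i = \sum_(t <- r | P t) label (f t) i.
Proof. exact: (big_morph (fun x => label x i) (fun x y => labelD x y i) (label0 i)). Qed.

Lemma ambientP x y :
  (forall i, state x i = state y i) -> (forall i, label x i = label y i) -> x = y.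
Proof.
move=> hs hl; apply/ffunP => -[[i j]|i]; last exact: hl.
by have /rowP/(_ j) := hs i; rewrite !mxE.
Qed.

Lemma has_span_intP a l x :
  reflect ((forall i, state x i != 0 -> in_hoint a l i) /\
           (forall i, label x i != 0 -> in_cint a l i))
          (has_span (SInt a l) x).
Proof.
apply: (iffP andP) => -[h1 h2].
  by split=> i; [move: h1 | move: h2] => /forallP/(_ i)/implyP.
by split; apply/forallP => i; apply/implyP; [apply: h1 | apply: h2].
Qed.

Lemma has_span0 s : has_span s (0 : ambient T).
Proof.
by case: s => [||a l] //=; apply/has_span_intP; split=> i; rewrite ?state0 ?label0 eqxx.
Qed.

Lemma has_span_lin s c x y :
  has_span s x -> has_span s y -> has_span s (c *: x + y).
Proof.
case: s => //= [/eqP-> /eqP->|a l]; first by rewrite scaler0 addr0.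
move=> /has_span_intP[xs xl] /has_span_intP[ys yl]; apply/has_span_intP.
split=> i; apply: contraR => out.
  by rewrite stateD stateZ (eqP (contraNT (xs i) out)) (eqP (contraNT (ys i) out))
    scaler0 addr0 eqxx.
by rewrite labelD labelZ (eqP (contraNT (xl i) out)) (eqP (contraNT (yl i) out))
  mulr0 addr0 eqxx.
Qed.

Lemma mem_span_filter_enum (P : pred (ambient T)) x :
  P 0 -> (forall c y z, P y -> P z -> P (c *: y + z)) ->
  (x \in <<[seq y <- enum (ambient T) | P y]>>%VS) = P x.
Proof.
move=> P0 Plin; apply/idP/idP => [|Px]; last first.
  by apply: memv_span; rewrite mem_filter Px mem_enum.
set X := [seq y <- _ | _] => /(coord_span (X := in_tuple X)) ->.
apply: (big_ind P) => // [y z Py Pz|j _]; first by rewrite -[y]scale1r Plin.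
rewrite -[_ *: _]addr0 Plin //.
by have := mem_nth 0 (ltn_ord j); rewrite mem_filter => /andP[].
Qed.

End Ambient.

Section LinearTrellis.
Variables (F : finFieldType) (n : nat) (T : trellis F n).
Hypothesis Tlin : linear_trellis T.
Implicit Types (x y : ambient T) (c : F).

Lemma edge0 i : edge T i 0 0 0.
Proof. by case: (Tlin i). Qed.

Lemma edgeD i v a w v' a' w' : edge T i v a w -> edge T i v' a' w' ->
  edge T i (v + v') (a + a') (w + w').
Proof. by case: (Tlin i) => _ lin /(lin 1) e /e; rewrite !scale1r mul1r. Qed.

Lemma edge_sum (I : Type) (r : seq I) (P : pred I) i v a w :
  (forall t, P t -> edge T i (v t) (a t) (w t)) ->
  edge T i (\sum_(t <- r | P t) v t) (\sum_(t <- r | P t) a t)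
           (\sum_(t <- r | P t) w t).
Proof.
move=> e; elim/big_rec3: _ => [|t ? ? ? Pt]; first exact: edge0.
exact/edgeD/e.
Qed.

Lemma cycle0 : is_cycle (0 : ambient T).
Proof. by apply/forallP => i; rewrite !state0 label0 edge0. Qed.

Lemma cycle_lin c x y : is_cycle x -> is_cycle y -> is_cycle (c *: x + y).
Proof.
move=> /forallP ex /forallP ey; apply/forallP => i.
by rewrite !stateD !stateZ labelD labelZ; case: (Tlin i) => _; apply.
Qed.

Lemma mem_span_subcode s x :
  (x \in span_subcode T s) = is_cycle x && has_span s x.
Proof.
apply: mem_span_filter_enum => [|c y z /andP[cy sy] /andP[cz sz]].
  by rewrite cycle0 has_span0.
by rewrite cycle_lin ?has_span_lin.
Qed.

Lemma mem_cycle_code x : (x \in cycle_code T) = is_cycle x.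
Proof. exact/mem_span_filter_enum/cycle_lin/cycle0. Qed.

Lemma cycle_code_full : cycle_code T = span_subcode T (SFull n).
Proof. by apply/vspaceP => x; rewrite mem_cycle_code mem_span_subcode andbT. Qed.

End LinearTrellis.

Section SpanOrder.
Variable n : nat.
Implicit Types (s t : tspan n) (a b i : 'I_n).

Lemma in_cintE a l i : in_cint a l i = (offset a i <= l)%N.
Proof. by []. Qed.

Lemma in_hointE a l i : in_hoint a l i = (0 < offset a i <= l)%N.
Proof. by []. Qed.

Definition span_len s : nat :=
  match s with SEmpty => 0 | SFull => n.+1 | SInt _ l => l.+1 end.

Lemma has_span_le (F : finFieldType) (T : trellis F n) s t (x : ambient T) :
  span_le t s -> has_span t x -> has_span s x.
Proof.
case: t => [| |a1 l1] /=; [by move=> _ /eqP->; apply: has_span0 | by case: s |].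
case: s => [| |a2 l2] //= le12 /has_span_intP[xs xl]; apply/has_span_intP.
case/orP: le12 => [/and3P[_ l2n /forallP sub] | /andP[/eqP l2n /forallP sub]];
  split=> i nz; rewrite ?in_cintE ?in_hointE.
- have /andP[pos le1] : (0 < offset a1 i <= l1)%N := xs i nz.
  have le2 : (offset a2 i <= l2)%N := implyP (sub i) le1.
  rewrite le2 andbT lt0n.
  apply: contraTneq l2n => /eqP; rewrite offset_eq0 => /eqP ia2.
  have : in_cint a1 l1 (ord_pred i) by rewrite in_cintE offset_ord_pred; case: eqP; lia.
  move=> /(implyP (sub _)); rewrite in_cintE offset_ord_pred ia2 offsetii /=; lia.
- exact: implyP (sub i) (xl i nz).
- exact: implyP (sub i) (xs i nz).
- by rewrite l2n; have := offset_lt a2 i; lia.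
Qed.

Lemma span_le_eq_len a1 a2 l : span_le (SInt a1 l) (SInt a2 l) -> a1 = a2.
Proof.
rewrite /= leqnn /=.
case/orP => [/andP[ln /forallP sub] | /andP[/eqP ln /forallP sub]]; apply/eqP.
  rewrite -offset_eq0; set d := offset a2 a1.
  have : ~~ in_cint a1 l (ord_pred a2).
    by apply/negP => /(implyP (sub _)); rewrite in_cintE offset_ord_pred offsetii /=; lia.
  rewrite in_cintE (offset_rebase a2 a1) offset_ord_pred offsetii /= -/d => out.
  have [j jl] := offset_surj a1 (ltn_ord l).
  have : in_cint a2 l j by apply: (implyP (sub j)); rewrite in_cintE jl.
  move: out jl; rewrite in_cintE (offset_rebase a2 a1 j) -/d.
  have := offset_lt a2 j; have := offset_lt a2 a1; rewrite -/d.
  by case: (leqP d n.-1); case: (leqP d (offset a2 j)); lia.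
have : ~~ in_hoint a1 l a2.
  by apply/negP => /(implyP (sub _)); rewrite in_hointE offsetii.
rewrite in_hointE ln eq_sym -offset_eq0; have := offset_lt a1 a2; lia.
Qed.

Lemma span_lt_len s t : span_lt t s -> (span_len t < span_len s)%N.
Proof.
rewrite /span_lt; case: t => [| |a1 l1]; case: s => [| |a2 l2] //=;
  rewrite ?eqxx ?andbF //; first by have := ltn_ord l1; lia.
case/andP => le12 ne12.
have [//|lt21|eq12] := ltngtP l1 l2.
  by have := ltn_ord l1; move: le12; case/orP => [/and3P[]|/andP[/eqP]]; lia.
have {eq12}eq12 : l1 = l2 by apply: val_inj.
by move: le12 ne12; rewrite eq12 => /span_le_eq_len->; rewrite eqxx.
Qed.

Lemma span_lt_pred a (l l' : 'I_n) : (0 < l)%N -> l' = l.-1 :> nat ->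
  span_lt (SInt a l') (SInt a l).
Proof.
move=> l_gt0 l'E; rewrite /span_lt /=; apply/andP; split; last first.
  by apply/negP => /eqP [] /(congr1 val); rewrite /= l'E; lia.
have := ltn_ord l; case: (ltnP l n.-1) => ln lt_ln; apply/orP; [left | right].
  apply/and3P; split; [lia | done | apply/forallP => i; apply/implyP].
  rewrite !in_cintE; lia.
apply/andP; split; first by apply/eqP; lia.
by apply/forallP => i; apply/implyP; rewrite !in_hointE; lia.
Qed.

Lemma span_lt_succ a (l l' : 'I_n) : (0 < l)%N -> l' = l.-1 :> nat ->
  span_lt (SInt (ordS a) l') (SInt a l).
Proof.
move=> l_gt0 l'E; rewrite /span_lt /=; apply/andP; split; last first.
  by apply/negP => /eqP [] _ /(congr1 val); rewrite /= l'E; lia.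
have n_gt1 : (1 < n)%N by have := ltn_ord l; lia.
have := ltn_ord l; case: (ltnP l n.-1) => ln lt_ln; apply/orP; [left | right].
  apply/and3P; split; [lia | done | apply/forallP => i; apply/implyP].
  by rewrite !in_cintE offset_ordSl //; case: eqP; lia.
apply/andP; split; first by apply/eqP; lia.
apply/forallP => i; apply/implyP; rewrite !in_hointE offset_ordSl //.
by have := offset_lt a i; case: eqP; lia.
Qed.

End SpanOrder.

Section Tail.
Variables (F : finFieldType) (n : nat) (T : trellis F n) (a : 'I_n).
Implicit Types (t : tspan n) (z : ambient T).

(* The edge at time [i] lies on the part of the span [t] from [a] to its end. *)
Definition kept t i : bool :=
  if t is SInt b m then in_cint b m a && (offset b a <= offset b i)%N else false.

(* The part of a cycle with span [t] after [a]; the state at [a] itself is cut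
   off, so [tail t z] is a cycle except at the edge leaving [a]. *)
Definition tail t z : ambient T :=
  [ffun co => match co with
   | inl p => if kept t (tag p) && (tag p != a) then z co else 0
   | inr i => if kept t i then z co else 0 end].

Lemma state_tail t z i :
  state (tail t z) i = if kept t i && (i != a) then state z i else 0.
Proof. by apply/rowP => j; rewrite !mxE ffunE /=; case: ifP; rewrite ?mxE. Qed.

Lemma label_tail t z i : label (tail t z) i = if kept t i then label z i else 0.
Proof. by rewrite /label ffunE. Qed.

Lemma state_tail_ordS t z i : has_span t z ->
  state (tail t z) (ordS i) = if kept t i then state z (ordS i) else 0.
Proof.
rewrite state_tail; case: t => [| |b m] //= /has_span_intP[zs _].
case: (in_cint b m a) => //=; rewrite offset_ordS.
case: eqP => [oi|oi].
  have /eqP zb : state z (ordS i) == 0.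
    by apply/negPn/negP => /zs; rewrite in_hointE offset_ordS oi eqxx ltnn.
  by rewrite zb !if_same.
rewrite -(inj_eq (@offset_inj _ b)) offset_ordS (negbTE (introN eqP oi)).
by rewrite andbC eq_sym -ltn_neqAle ltnS.
Qed.

Lemma has_span_not_kept t z : has_span t z -> t != SFull n -> ~~ kept t a ->
  [/\ state z a = 0, label z a = 0 & state z (ordS a) = 0].
Proof.
case: t => [/eqP->| |b m] //=; first by rewrite state0 label0 state0.
move=> /has_span_intP[zs zl] _; rewrite leqnn andbT in_cintE -ltnNge => out.
split; apply/eqP.
- by apply/negPn/negP => /zs; rewrite in_hointE; lia.
- by apply/negPn/negP => /zl; rewrite in_cintE; lia.
apply/negPn/negP => /zs; rewrite in_hointE offset_ordS.
by case: eqP => //= _; lia.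
Qed.

Section Support.
Variable l : nat.

(* For [t = SInt b m]: the interval [b, b + m] ends before [a + l]. *)
Definition ends_before t : bool :=
  if t is SInt b m then (m < l + offset b a)%N else true.

Lemma state_tail_supp t z i : has_span t z -> ends_before t ->
  state (tail t z) i != 0 -> (0 < offset a i < l)%N.
Proof.
rewrite state_tail; case: t => [| |b m] /=; try by rewrite eqxx.
move=> /has_span_intP[zs _] end_m.
case: ifP => [/andP[/andP[am ai] ia] /zs|]; last by rewrite eqxx.
rewrite in_hointE (offset_rebase b a i) ai.
have : offset b i != offset b a by rewrite (inj_eq (@offset_inj _ b)).
by move: am; rewrite in_cintE; lia.
Qed.

Lemma label_tail_supp t z i : has_span t z -> ends_before t ->
  label (tail t z) i != 0 -> (offset a i < l)%N.
Proof.
rewrite label_tail; case: t => [| |b m] /=; try by rewrite eqxx.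
move=> /has_span_intP[_ zl] end_m.
case: ifP => [/andP[am ai] /zl|]; last by rewrite eqxx.
by rewrite in_cintE (offset_rebase b a i) ai; move: am; rewrite in_cintE; lia.
Qed.

End Support.
End Tail.

Section Exchange.
Variables (F : finFieldType) (n : nat) (T : trellis F n).
Hypothesis Tlin : linear_trellis T.
Variables (a l : 'I_n) (P : pred (tspan n)) (xs : tspan n -> ambient T).
Hypothesis P_shorter : forall t, P t -> (t != SInt a l) && (span_len t <= l.+1)%N.
Hypothesis xs_sub : forall t, P t -> xs t \in span_subcode T t.
Hypothesis sum_xs_sub : \sum_(t | P t) xs t \in span_subcode T (SInt a l).

Let x := \sum_(t | P t) xs t.
Let y := \sum_(t | P t) tail a t (xs t).

Let cycle_xs t : P t -> is_cycle (xs t).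
Proof. by move/xs_sub; rewrite mem_span_subcode // => /andP[]. Qed.

Let span_xs t : P t -> has_span t (xs t).
Proof. by move/xs_sub; rewrite mem_span_subcode // => /andP[]. Qed.

Let not_full t : P t -> t != SFull n.
Proof. by move/P_shorter; case: t => //=; have := ltn_ord l; lia. Qed.

Let ends_before_P t : P t -> ends_before a l t.
Proof.
move/P_shorter; case: t => [| |b m] //= /andP[ne]; rewrite ltnS => ml.
have [ba | ba] := eqVneq b a.
  subst b; rewrite offsetii addn0 ltn_neqAle ml andbT.
  by apply: contraNneq ne => /val_inj->.
have : offset b a != 0%N by rewrite offset_eq0 eq_sym.
lia.
Qed.

Let x_cycle : is_cycle x.
Proof. by move: sum_xs_sub; rewrite mem_span_subcode // => /andP[]. Qed.

Let x_spans : has_span (SInt a l) x.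
Proof. by move: sum_xs_sub; rewrite mem_span_subcode // => /andP[]. Qed.

Let zero_unless_kept t : P t -> ~~ kept a t a ->
  [/\ state (xs t) a = 0, label (xs t) a = 0 & state (xs t) (ordS a) = 0].
Proof. by move=> Pt; apply: has_span_not_kept; [apply: span_xs | apply: not_full]. Qed.

Let state_y i :
  state y i = \sum_(t | P t) (if kept a t i then state (xs t) i else 0).
Proof.
rewrite /y state_sum; case: (i =P a) => [-> | /eqP ia]; last first.
  by apply: eq_bigr => t _; rewrite state_tail ia andbT.
rewrite big1 => [|t _]; last by rewrite state_tail eqxx andbF.
have /has_span_intP[xs_supp _] := x_spans.
have /eqP xa : state x a == 0.
  by apply/negPn/negP => /xs_supp; rewrite in_hointE offsetii.
apply/esym/(etrans _ xa); rewrite /x state_sum; apply: eq_bigr => t Pt.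
by case: ifP => // /negbT /(zero_unless_kept Pt)[].
Qed.

Let y_cycle : is_cycle y.
Proof.
apply/forallP => i; rewrite (state_y i) /y state_sum label_sum.
rewrite (eq_bigr (fun t => if kept a t i then state (xs t) (ordS i) else 0));
  last by move=> t Pt; rewrite state_tail_ordS ?span_xs.
rewrite (eq_bigr (fun t => if kept a t i then label (xs t) i else 0));
  last by move=> t Pt; rewrite label_tail.
apply: edge_sum => // t Pt; case: ifP => _; last exact: edge0.
exact: (forallP (cycle_xs Pt)).
Qed.

Let y_state_supp i : state y i != 0 -> (0 < offset a i < l)%N.
Proof.
apply: contraNT => out; rewrite /y state_sum big1 // => t Pt.
apply/eqP; apply: contraNT out.
by apply: state_tail_supp; [apply: span_xs | apply: ends_before_P].
Qed.

Let y_label_supp i : label y i != 0 -> (offset a i < l)%N.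
Proof.
apply: contraNT => out; rewrite /y label_sum big1 // => t Pt.
apply/eqP; apply: contraNT out.
by apply: label_tail_supp; [apply: span_xs | apply: ends_before_P].
Qed.

Let label_y_a : label y a = label x a.
Proof.
rewrite /x /y !label_sum; apply: eq_bigr => t Pt; rewrite label_tail.
by case: ifP => // /negbT /(zero_unless_kept Pt)[].
Qed.

Let state_y_ordS_a : state y (ordS a) = state x (ordS a).
Proof.
rewrite /x /y !state_sum; apply: eq_bigr => t Pt.
rewrite state_tail_ordS ?span_xs //.
by case: ifP => // /negbT /(zero_unless_kept Pt)[].
Qed.

Let diff_cycle : is_cycle (x - y).
Proof. by rewrite addrC -scaleN1r cycle_lin. Qed.

Let offset_a_ordS : (0 < l)%N -> offset a (ordS a) = 1%N.
Proof.
by move=> l_gt0; rewrite offset_ordS offsetii; have := ltn_ord l; case: eqP; lia.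
Qed.

Let diff_state_supp i : (0 < l)%N -> state (x - y) i != 0 ->
  (0 < offset (ordS a) i <= l.-1)%N.
Proof.
move=> l_gt0 nz; have n_gt1 : (1 < n)%N by have := ltn_ord l; lia.
have ia : i != ordS a.
  by apply: contraNneq nz => ->; rewrite stateB state_y_ordS_a subrr.
have supp : (0 < offset a i <= l)%N.
  have /has_span_intP[xs_supp _] := x_spans.
  have [x0|/xs_supp//] := eqVneq (state x i) 0.
  by move: nz; rewrite stateB x0 sub0r oppr_eq0 => /y_state_supp; lia.
have ne1 : offset a i != 1%N.
  by rewrite -(offset_a_ordS l_gt0) (inj_eq (@offset_inj _ a)).
by rewrite offset_ordSl //; case: eqP; lia.
Qed.

Let diff_label_supp i : (0 < l)%N -> label (x - y) i != 0 ->
  (offset (ordS a) i <= l.-1)%N.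
Proof.
move=> l_gt0 nz; have n_gt1 : (1 < n)%N by have := ltn_ord l; lia.
have ia : i != a by apply: contraNneq nz => ->; rewrite labelB label_y_a subrr.
have supp : (offset a i <= l)%N.
  have /has_span_intP[_ xl_supp] := x_spans.
  have [x0|/xl_supp//] := eqVneq (label x i) 0.
  by move: nz; rewrite labelB x0 sub0r oppr_eq0 => /y_label_supp; lia.
have ne0 : offset a i != 0%N by rewrite offset_eq0.
by rewrite offset_ordSl //; case: eqP; lia.
Qed.

Lemma sum_mem_span_subcode_lt : x \in span_subcode_lt T (SInt a l).
Proof.
have mem_lt t u : span_lt t (SInt a l) -> u \in span_subcode T t ->
    u \in span_subcode_lt T (SInt a l).
  by move=> lt_ts; apply/subvP/(sumv_sup t lt_ts (subvv _)).
have [l0 | l_gt0] := posnP l.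
  suff -> : x = 0 by apply: mem0v.
  have /has_span_intP[xs_supp xl_supp] := x_spans.
  apply: ambientP => i; rewrite ?state0 ?label0; apply/eqP/negPn/negP.
    by move/xs_supp; rewrite in_hointE l0; lia.
  move=> /[dup] /xl_supp; rewrite in_cintE l0 leqn0 offset_eq0 => /eqP->.
  by rewrite -label_y_a => /y_label_supp; rewrite l0.
have [l' l'E] : exists l' : 'I_n, l' = l.-1 :> nat.
  by exists (Ordinal (leq_ltn_trans (leq_pred l) (ltn_ord l))).
have -> : x = y + (x - y) by rewrite addrC subrK.
apply: memvD; apply: mem_lt.
- exact: span_lt_pred l_gt0 l'E.
- rewrite mem_span_subcode // y_cycle; apply/has_span_intP; split=> i.
    by move/y_state_supp; rewrite in_hointE l'E; lia.
  by move/y_label_supp; rewrite in_cintE l'E; lia.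
- exact: span_lt_succ l_gt0 l'E.
rewrite mem_span_subcode // diff_cycle; apply/has_span_intP; split=> i.
  by move/(diff_state_supp l_gt0); rewrite in_hointE l'E.
by move/(diff_label_supp l_gt0); rewrite in_cintE l'E.
Qed.

End Exchange.

Section QuotientBasis.
Variables (K : fieldType) (vT : vectType K).
Implicit Types (U L : {vspace vT}) (X : seq vT).

Lemma quotient_basis_free U L X : quotient_basis U L X -> free X.
Proof.
case=> _ _ indep; change (free (in_tuple X)); apply/freeP => c c0.
by apply: indep; rewrite c0 mem0v.
Qed.

Lemma quotient_basis_capv U L X : quotient_basis U L X -> (<<X>> :&: L = 0)%VS.
Proof.
case=> _ _ indep; apply/eqP; rewrite -subv0; apply/subvP => z /memv_capP[zX zL].
rewrite memv0 (coord_span (X := in_tuple X) zX) in zL *.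
by apply/eqP/big1 => j _; rewrite (indep _ zL) scale0r.
Qed.

Lemma quotient_basis_vbasis U L : quotient_basis U L (vbasis (U :\: L)).
Proof.
have D_basis := vbasisP (U :\: L); split.
- by apply/allP => v /(basis_mem D_basis); apply/subvP/diffvSl.
- by rewrite (span_basis D_basis) -{1}(addv_diff_cap U L) addvS // capvSr.
move=> c cL.
have /freeP : free (in_tuple (vbasis (U :\: L))) := basis_free D_basis.
apply; apply/eqP.
rewrite -memv0 -(capv_diff U L) memv_cap cL andbT.
by apply: rpred_sum => j _; apply/rpredZ/(basis_mem D_basis)/mem_nth.
Qed.

End QuotientBasis.

Lemma mem_span_subcode_lt (F : finFieldType) (n : nat) (T : trellis F n)
    (P : pred (tspan n)) s x :
  linear_trellis T ->
  (forall t, P t -> (t != s) && (span_len t <= span_len s)%N) ->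
  x \in span_subcode T s -> x \in (\sum_(t | P t) span_subcode T t)%VS ->
  x \in span_subcode_lt T s.
Proof.
move=> Tlin; case: s => [| |a l] P_shorter.
- by rewrite mem_span_subcode // => /andP[_ /eqP->] _; apply: mem0v.
- move=> _; apply/subvP/subv_sumP => t Pt; apply: sumv_sup (subvv _).
  by case/andP: (P_shorter t Pt); rewrite /span_lt; case: t {Pt}.
move=> xS /memv_sumP[xs xs_sub x_sum]; rewrite x_sum in xS *.
exact: sum_mem_span_subcode_lt P_shorter xs_sub xS.
Qed.

Section ProductBasis.
Variables (F : finFieldType) (n : nat) (T : trellis F n).
Hypothesis Tlin : linear_trellis T.
Variable B : tspan n -> seq (ambient T).
Hypothesis B_qbasis :
  forall s, quotient_basis (span_subcode T s) (span_subcode_lt T s) (B s).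

Local Notation BB := (flatten [seq B s | s <- enum {: tspan n}]).

Let B_sub s v : v \in B s -> v \in span_subcode T s.
Proof. by case: (B_qbasis s) => /allP + _ _; apply. Qed.

(* Listing the spans by decreasing length, each [B s] meets the span of the
   later ones only inside [span_subcode_lt T s]. *)
Lemma free_flatten_span_len_sorted (ss : seq (tspan n)) :
  uniq ss -> sorted [rel s t | span_len t <= span_len s]%N ss ->
  free (flatten [seq B s | s <- ss]).
Proof.
elim: ss => [|s ss IH] /=; first by rewrite nil_free.
move=> /andP[s_ss uss].
rewrite path_sortedE; last by move=> ? ? ? /= /[swap]; apply: leq_trans.
move=> /andP[/allP shorter sorted_ss].
rewrite cat_free (quotient_basis_free (B_qbasis s)) IH //=.
apply/directv_addP/eqP; rewrite -subv0 -(quotient_basis_capv (B_qbasis s)).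
apply/subvP => z /memv_capP[zB zss]; rewrite memv_cap zB /=.
apply: (mem_span_subcode_lt (P := mem ss)) => //.
- move=> t t_ss; have /= -> := shorter t t_ss; rewrite andbT.
  by apply: contraNneq s_ss => <-.
- by move: zB; apply/subvP/span_subvP => v /B_sub.
move: zss; apply/subvP/span_subvP => v /flattenP[_ /mapP[t t_ss ->] /B_sub].
exact/subvP/(sumv_sup t t_ss (subvv _)).
Qed.

Lemma free_product_basis : free BB.
Proof.
set sorted_spans := sort [rel s t | span_len t <= span_len s]%N (enum {: tspan n}).
have sorted_perm : perm_eq sorted_spans (enum {: tspan n}) by rewrite perm_sort.
rewrite -(perm_free (perm_flatten (perm_map B sorted_perm))).
apply: free_flatten_span_len_sorted; first by rewrite sort_uniq enum_uniq.
by apply: sort_sorted => s t /=; apply: leq_total.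
Qed.

Lemma span_product_basis s :
  (<<[seq b <- BB | b \in span_subcode T s]>> = span_subcode T s)%VS.
Proof.
apply/eqP; rewrite eqEsubv; apply/andP; split.
  by apply/span_subvP => v; rewrite mem_filter => /andP[].
have [k] := ubnP (span_len s); elim: k s => // k IH s /ltnSE le_sk.
case: (B_qbasis s) => _ SsB _; apply: subv_trans SsB _; rewrite subv_add.
apply/andP; split.
  apply/sub_span => v vB; rewrite mem_filter B_sub //=.
  by apply/flattenP; exists (B s) => //; apply/map_f; rewrite mem_enum.
apply/subv_sumP => t lt_ts.
apply: subv_trans (IH t (leq_trans (span_lt_len lt_ts) le_sk)) _.
apply/sub_span => v; rewrite !mem_filter => /andP[vt ->]; rewrite andbT.
move: vt; rewrite !mem_span_subcode // => /andP[-> /=].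
by apply: has_span_le; case/andP: lt_ts.
Qed.

Lemma basis_of_product_basis : basis_of (cycle_code T) BB.
Proof.
rewrite /basis_of free_product_basis andbT cycle_code_full //.
rewrite -span_product_basis; apply/eqP; congr span.
apply/esym/all_filterP/allP => v /flattenP[_ /mapP[t _ ->] /B_sub].
by rewrite !mem_span_subcode // => /andP[-> _].
Qed.

End ProductBasis.

Theorem mainTheorem2 (F : finFieldType) (n : nat) (T : trellis F n)
  (Hn : (0 < n)%N)
  (Hlin : linear_trellis T) (Htrim : trim_trellis T) (Hred : reduced_trellis T) :
  (forall B : tspan n -> seq (ambient T),
    (forall s : tspan n,
       quotient_basis (span_subcode T s) (span_subcode_lt T s) (B s)) ->
    let BB := flatten [seq B s | s <- enum {: tspan n}] in
    basis_of (cycle_code T) BB /\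
    forall s : tspan n,
      (<<[seq b <- BB | b \in span_subcode T s]>> = span_subcode T s)%VS)
  /\
  (exists X : seq (ambient T),
    basis_of (cycle_code T) X /\
    forall s : tspan n,
      (<<[seq b <- X | b \in span_subcode T s]>> = span_subcode T s)%VS).
Proof.
split=> [B B_qbasis | ].
  by split; [apply: basis_of_product_basis | apply: span_product_basis].
pose B s := vbasis (span_subcode T s :\: span_subcode_lt T s) : seq (ambient T).
have B_qbasis s : quotient_basis (span_subcode T s) (span_subcode_lt T s) (B s).
  exact: quotient_basis_vbasis.
exists (flatten [seq B s | s <- enum {: tspan n}]).
by split; [apply: basis_of_product_basis | apply: span_product_basis].
Qed.
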